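(* There exist $p\in\mathcal P$ and $x\in N$ such that $D_{\mu(p)}(p)=D_{\mu(p^r)}(p^r)=\{x\}$ if and only if $(h,n)\notin T_1$, where $T_1=\{(h,n): h\le3\}\cup\{(h,n): n\le3\}\cup\{(4,4),(5,4),(7,4),(5,5)\}$.
   Context: Let $n,h\ge2$ be integers, $N=\{1,\dots,n\}$, $H=\{1,\dots,h\}$. $\mathcal P$ is the set of $h$-tuples $p=(p_1,\dots,p_h)$ of linear orders on $N$; $p^r$ is obtained by reversing each $p_i$; $x>_{p_i}y$ means $x\ne y$ and $p_i$ ranks $x$ above $y$. For an integer $\mu$ with $h/2<\mu\le h$, $D_\mu(p)=\{x\in N: \forall y\in N,\ |\{i: y>_{p_i}x\}|<\mu\}$, and $\mu(p)=\min\{\mu\in\mathbb N\cap(h/2,h]: D_\mu(p)\neq\varnothing\}$. *)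

From mathcomp Require Import all_boot.
Set Implicit Arguments. Unset Strict Implicit. Unset Printing Implicit Defensive.

(* N = {1..n} is modelled as 'I_n, H = {1..h} as 'I_h.
   A linear order on N is a boolean relation [r] where [r x y] means
   "x is ranked at or above y": reflexive, antisymmetric, transitive, total. *)
Definition linear_order (n : nat) (r : rel 'I_n) : Prop :=
  [/\ reflexive r, antisymmetric r, transitive r & total r].

(* A profile: an h-tuple of relations (the linear-order condition is imposed
   separately, as membership in \mathcal P). *)
Definition profile (n h : nat) := 'I_h -> rel 'I_n.

Definition in_P (n h : nat) (p : profile n h) : Prop :=
  forall i, linear_order (p i).

Definition spref (n h : nat) (p : profile n h) (i : 'I_h) (x y : 'I_n) : bool :=
  (x != y) && p i x y.

Definition rev_profile (n h : nat) (p : profile n h) : profile n h :=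
  fun i x y => p i y x.

Definition D (n h : nat) (mu : nat) (p : profile n h) : {set 'I_n} :=
  [set x | [forall y, #|[set i | spref p i y x]| < mu]].

(* mu(p) = min { mu in N /\ (h/2, h] | D_mu(p) <> empty }.
   (The default value h of the min is never used for profiles in \mathcal P,
   since D_h(p) is nonempty.) *)
Definition mu_of (n h : nat) (p : profile n h) : nat :=
  \big[minn/h]_(m < h.+1 | (h < 2 * m) && (D m p != set0)) (m : nat).

Definition T1 (h n : nat) : Prop :=
  h <= 3 \/ n <= 3 \/
  (h, n) = (4, 4) \/ (h, n) = (5, 4) \/ (h, n) = (7, 4) \/ (h, n) = (5, 5).

From mathcomp Require Import all_boot zify.
Set Implicit Arguments. Unset Strict Implicit. Unset Printing Implicit Defensive.

(* Let [M(y)] be the largest number of voters preferring one alternative to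
   [y].  Then [D_mu(p) = {y | M(y) < mu}], so [D_{mu(p)}(p) = {x}] exactly when
   every [y <> x] is beaten, by a strict majority, more heavily than anything
   beats [x].

   Necessity: reversing [p] exchanges "beating [x]" with "being beaten by [x]";
   for whichever of [p], [p^r] has the larger [M(x) =: M] we get [h <= 2 M], and
   every [y <> x] is beaten by at least [M + 1] voters by some [z <> x].  In each
   voter's ranking the top alternative among [N \ {x}] is beaten by nobody, so
   summing over voters gives [(n - 1)(M + 1) <= h (n - 2)], which fails on
   [T_1].

   Sufficiency: adding two mutually reversed voters raises every pairwise count
   by one, and cloning an alternative other than [x] leaves all counts between
   distinct originals unchanged; this propagates five explicit profiles, for
   [(n, h)] in [{(4, 6), (5, 4), (6, 5), (5, 7), (4, 9)}], to every pair outside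
   [T_1]. *)

Lemma bigminn_le_seq (I : eqType) (r : seq I) (P : pred I) (F : I -> nat) d i0 :
  i0 \in r -> P i0 -> \big[minn/d]_(i <- r | P i) F i <= F i0.
Proof.
elim: r => [|a r IHr] //=; rewrite inE big_cons => /predU1P[<- -> | ri0 Pi0].
  exact: geq_minl.
by case: (P a); [apply: leq_trans (geq_minr _ _) _ |]; apply: IHr.
Qed.

Lemma exists_other n (x : 'I_n) : 2 <= n -> exists y, y != x.
Proof.
move=> n_ge2; apply/existsP; rewrite -negb_forall; apply/forallP => all_x.
have : #|[set~ x]| == 0 by rewrite cards_eq0; apply/eqP/setP => y; rewrite !inE all_x.
by rewrite cardsC1 card_ord; lia.
Qed.

Section Counts.

Variables n h : nat.
Implicit Types (p : profile n h) (x y z w : 'I_n).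

Definition npref p z y : nat := #|[set i | spref p i z y]|.

Definition opposition p y : nat := \max_z npref p z y.

Definition clear_winner p x : Prop :=
  forall y, y != x ->
    exists2 z, h < 2 * npref p z y & opposition p x < npref p z y.

Lemma npref_le p z y : npref p z y <= h.
Proof. by rewrite -[h]card_ord max_card. Qed.

Lemma npref_xx p y : npref p y y = 0.
Proof. by apply: eq_card0 => i; rewrite !inE /spref eqxx. Qed.

Lemma npref_rev p z y : npref (rev_profile p) z y = npref p y z.
Proof. by apply: eq_card => i; rewrite !inE /spref /rev_profile eq_sym. Qed.

Lemma npref_sum p z y : npref p z y = \sum_(i < h) (spref p i z y : nat).
Proof.
rewrite /npref -sum1_card big_mkcond /=.
by apply: eq_bigr => i _; rewrite inE; case: spref.
Qed.

Lemma leq_opposition p z y : npref p z y <= opposition p y.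
Proof. exact: (leq_bigmax z). Qed.

Lemma opposition_le p y : opposition p y <= h.
Proof. by apply/bigmax_leqP => z _; apply: npref_le. Qed.

Lemma opposition_witness p y : exists z, opposition p y = npref p z y.
Proof. by eexists; apply: bigmax_eq_arg. Qed.

Lemma opposition_ltP p y k :
  reflect (forall z, npref p z y < k) (opposition p y < k).
Proof.
apply: (iffP idP) => [lt_k z | lt_k].
  exact: leq_ltn_trans (leq_opposition p z y) lt_k.
by have [z ->] := opposition_witness p y.
Qed.

Lemma mem_D m p y : (y \in D m p) = (opposition p y < m).
Proof. by rewrite inE; apply/forallP/opposition_ltP. Qed.

Lemma mu_of_gt p : 0 < h -> h < 2 * mu_of p.
Proof.
by move=> h_gt0; apply: (big_ind (fun v => h < 2 * v)) => [||m /andP[]]; lia.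
Qed.

Lemma mu_of_min p m : m <= h -> h < 2 * m -> D m p != set0 -> mu_of p <= m.
Proof.
move=> m_le_h m_maj Dm; pose i0 : 'I_h.+1 := Ordinal (m_le_h : m < h.+1).
apply: (@bigminn_le_seq _ _ _ (fun i : 'I_h.+1 => i : nat) _ i0).
  exact: mem_index_enum.
by rewrite /= m_maj Dm.
Qed.

Lemma leq_mu_of p k :
  k <= h -> (forall m, h < 2 * m -> D m p != set0 -> k <= m) -> k <= mu_of p.
Proof.
move=> k_le_h k_min; apply: (big_ind (fun v => k <= v)) => // [a b|m /andP[]].
  by rewrite leq_min => -> ->.
exact: k_min.
Qed.

Lemma D_mu_of_set1 p x : 0 < h -> 2 <= n ->
  D (mu_of p) p = [set x] <-> clear_winner p x.
Proof.
move=> h_gt0 n_ge2; split => [Dx y yx | Cx].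
  have maj := mu_of_gt p h_gt0.
  have : x \in D (mu_of p) p by rewrite Dx set11.
  have : y \notin D (mu_of p) p by rewrite Dx inE.
  rewrite !mem_D -leqNgt; have [z ->] := opposition_witness p y.
  by exists z; lia.
pose K := maxn (h %/ 2).+1 (opposition p x).+1.
have K_beaten y : y != x -> K <= opposition p y.
  move=> yx; have [z z_maj z_opp] := Cx y yx.
  by apply: leq_trans (leq_opposition p z y); rewrite geq_max; lia.
have DK : D K p = [set x].
  apply/setP => y; rewrite mem_D inE.
  have [-> | yx] := eqVneq y x; first by rewrite leq_max ltnSn orbT.
  by rewrite ltnNge K_beaten.
suff -> : mu_of p = K by [].
have [y0 y0x] := exists_other x n_ge2.
have K_le_h : K <= h := leq_trans (K_beaten y0 y0x) (opposition_le p y0).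
have K_maj : h < 2 * K by rewrite /K; lia.
apply/eqP; rewrite eqn_leq mu_of_min ?DK //=; last first.
  by apply/set0Pn; exists x; rewrite set11.
apply: leq_mu_of => // m m_maj /set0Pn[y]; rewrite mem_D.
have [-> | yx] := eqVneq y x; first by rewrite /K; lia.
by move/ltnW; apply: leq_trans (K_beaten y yx).
Qed.

End Counts.

Lemma linear_order_rev n (r : rel 'I_n) :
  linear_order r -> linear_order (fun u v => r v u).
Proof.
case=> r_refl r_anti r_trans r_total; split => // [u v | v u w ruv rvw].
  by rewrite andbC; apply: r_anti.
exact: r_trans rvw ruv.
Qed.

Lemma linear_order_ranked n (f : 'I_n -> nat) :
  injective f -> linear_order (fun u v => f u <= f v).
Proof.
move=> f_inj; split => [u | u v /anti_leq/f_inj | v u w | u v] //.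
- exact: leq_trans.
- exact: leq_total.
Qed.

Lemma in_P_rev n h (p : profile n h) : in_P p -> in_P (rev_profile p).
Proof. by move=> p_lin i; apply: linear_order_rev. Qed.

Section LinearProfile.

Variables (n h : nat) (p : profile n h).
Hypothesis p_lin : in_P p.

Lemma spref_trans i : transitive (spref p i).
Proof.
case: (p_lin i) => _ anti tr _ b a c /andP[ab pab] /andP[bc pbc].
rewrite /spref (tr _ _ _ pab pbc) andbT; apply: contraTneq ab => eac.
by rewrite negbK; apply/eqP/anti; rewrite pab eac pbc.
Qed.

Lemma spref_asym i a b : a != b -> spref p i b a = ~~ spref p i a b.
Proof.
case: (p_lin i) => _ anti _ tot ab; rewrite /spref ab eq_sym ab /=.
case pab: (p i a b); case pba: (p i b a) => //=.
  by move: ab; rewrite (anti a b) ?pab ?pba ?eqxx.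
by move: (tot a b); rewrite pab pba.
Qed.

Lemma npref_compl a b : a != b -> npref p a b + npref p b a = h.
Proof.
move=> ab; rewrite -[RHS]card_ord -(cardsC [set i | spref p i a b]); congr (_ + _).
by apply: eq_card => i; rewrite !inE spref_asym.
Qed.

Lemma exists_top i (Y : {set 'I_n}) :
  Y != set0 -> exists2 y, y \in Y & forall z, z \in Y -> ~~ spref p i z y.
Proof.
case/set0Pn => y1 y1Y.
case: (arg_minnP (fun y => #|[set z | spref p i z y]|) y1Y) => y yY y_min.
exists y => // z zY; apply: contraTN (y_min z zY) => zy; rewrite -ltnNge.
apply: proper_card; apply/properP; split.
  by apply/subsetP => w; rewrite !inE => wz; apply: spref_trans wz zy.
by exists z; rewrite !inE ?zy //= /spref eqxx.
Qed.

Lemma beaten_set_bound (Y : {set 'I_n}) s : Y != set0 ->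
  (forall y, y \in Y -> exists2 z, z \in Y & s <= npref p z y) ->
  #|Y| * s <= h * #|Y|.-1.
Proof.
move=> Y0 beaten.
have beater y : exists z, y \in Y -> z \in Y /\ s <= npref p z y.
  by have [/beaten[z zY s_le] | _] := boolP (y \in Y); [exists z | exists y].
have [f f_beaten] := fin_all_exists beater.
rewrite -sum_nat_const.
apply: (@leq_trans (\sum_(y in Y) \sum_(i < h) (spref p i (f y) y : nat))).
  by apply: leq_sum => y /f_beaten[_]; rewrite npref_sum.
rewrite exchange_big /=.
apply: (@leq_trans (\sum_(i < h) #|Y|.-1)); last by rewrite sum_nat_const card_ord.
apply: leq_sum => i _; have [y0 y0Y y0_top] := exists_top i Y0.
rewrite -sum1_card (bigD1 y0) //= [X in _ <= X.-1](bigD1 y0) //=.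
have [fY _] := f_beaten y0 y0Y; rewrite (negbTE (y0_top _ fY)) add0n.
by apply: leq_sum => y _; case: spref.
Qed.

Lemma clear_winner_bound x : 2 <= n -> clear_winner p x ->
  (forall y, npref p x y <= opposition p x) ->
  n.-1 * (opposition p x).+1 <= h * n.-2.
Proof.
move=> n_ge2 Cx x_weak.
have card_other : #|[set~ x]| = n.-1 by rewrite cardsC1 card_ord.
rewrite -card_other; apply: beaten_set_bound.
  by rewrite -card_gt0 card_other; lia.
move=> y; rewrite !inE => yx; have [z z_maj z_opp] := Cx y yx.
exists z => //; rewrite !inE; apply: contraTneq z_opp => ->.
by rewrite -leqNgt x_weak.
Qed.

End LinearProfile.

Lemma reversal_bound n h (p : profile n h) x : 2 <= n -> in_P p ->
  clear_winner p x -> clear_winner (rev_profile p) x ->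
  exists M, h <= 2 * M /\ n.-1 * M.+1 <= h * n.-2.
Proof.
move=> n_ge2; wlog le_rev : p / opposition (rev_profile p) x <= opposition p x.
  move=> sym p_lin Cp Cr.
  have [le | /ltnW le] := leqP (opposition (rev_profile p) x) (opposition p x).
    exact: sym le p_lin Cp Cr.
  exact: sym (rev_profile p) le (in_P_rev p_lin) Cr Cp.
have x_weak y : npref p x y <= opposition p x.
  by rewrite -npref_rev; apply: leq_trans le_rev; apply: leq_opposition.
move=> p_lin Cp _; exists (opposition p x); split; last exact: clear_winner_bound.
have [y yx] := exists_other x n_ge2.
have := npref_compl p_lin yx; have := leq_opposition p y x; have := x_weak y.
lia.
Qed.

Lemma not_T1 n h M : 2 <= n -> 2 <= h -> h <= 2 * M ->
  n.-1 * M.+1 <= h * n.-2 -> ~ T1 h n.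
Proof.
move=> n_ge2 h_ge2 h_le bound; case=> [h_le3 | [n_le3 | ]].
- have : n.-1 * h <= h * n.-2 by apply: leq_trans bound; rewrite leq_mul2l; lia.
  rewrite mulnC leq_mul2l; lia.
- have [E | E] : n = 2 \/ n = 3 by lia.
    by subst; rewrite muln0 in bound.
  by subst; lia.
- by case=> [|[|[|]]] [E1 E2]; subst; lia.
Qed.

Definition realizable n h : Prop :=
  exists (p : profile n h) (x : 'I_n),
    [/\ in_P p, clear_winner p x & clear_winner (rev_profile p) x].

Section AddPair.

Variables (n h : nat) (p : profile n h).

Definition add_pair : profile n h.+2 := fun i =>
  if unlift ord0 i is Some i' then
    if unlift ord0 i' is Some j then p j else fun u v => v <= u
  else fun u v => u <= v.

Lemma in_P_add_pair : in_P p -> in_P add_pair.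
Proof.
move=> p_lin i; rewrite /add_pair.
case: unliftP => [i' _|_]; last exact: linear_order_ranked val_inj.
case: unliftP => [j _|_]; first exact: p_lin.
exact/linear_order_rev/linear_order_ranked/val_inj.
Qed.

Lemma npref_add_pair z y : npref add_pair z y = npref p z y + (z != y).
Proof.
rewrite !npref_sum !big_ord_recl /= /spref /add_pair unlift_none liftK unlift_none.
under eq_bigr => j _ do rewrite !liftK.
rewrite addnA addnC; congr (_ + _).
have [-> | zy] := eqVneq z y; first by rewrite /= ?eqxx.
by case: ltngtP => // /val_inj E; rewrite E eqxx in zy.
Qed.

End AddPair.

Lemma clear_winner_add_pair n h (p : profile n h) (q : profile n h.+2) x :
  (forall z y, npref q z y = npref p z y + (z != y)) ->
  clear_winner p x -> clear_winner q x.
Proof.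
move=> qE Cx y yx; have [z z_maj z_opp] := Cx y yx.
have zy : z != y by apply: contraTneq z_maj => ->; rewrite npref_xx.
exists z; rewrite qE zy; first lia.
apply/opposition_ltP => w; rewrite qE.
by have := leq_opposition p w x; case: (w != x); lia.
Qed.

Lemma realizable_add_pair n h : realizable n h -> realizable n h.+2.
Proof.
case=> p [x [p_lin Cp Cr]]; exists (add_pair p), x; split.
- exact: in_P_add_pair.
- exact: clear_winner_add_pair (npref_add_pair p) Cp.
- apply: clear_winner_add_pair Cr => z y.
  by rewrite (npref_rev (add_pair p)) (npref_rev p) npref_add_pair eq_sym.
Qed.

Section Clone.

Variables (n : nat) (a : 'I_n).

(* The new alternative [ord_max] of ['I_n.+1] is a copy of [a]. *)
Definition collapse (u : 'I_n.+1) : 'I_n :=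
  if unlift ord_max u is Some v then v else a.

Lemma collapse_lift (v : 'I_n) : collapse (lift ord_max v) = v.
Proof. by rewrite /collapse liftK. Qed.

Lemma collapse_inj u v : collapse u = collapse v -> collapse u != a -> u = v.
Proof.
rewrite /collapse; case: unliftP => [u' ->|->]; case: unliftP => [v' ->|->] //.
- by move=> ->.
- by move=> ->; rewrite eqxx.
- by move=> ->; rewrite eqxx.
Qed.

Variable h : nat.

(* Two copies of the same alternative are ranked by index, so [a] is just above
   its clone. *)
Definition clone (p : profile n h) : profile n.+1 h := fun i u v =>
  if collapse u == collapse v then u <= v else p i (collapse u) (collapse v).

Lemma in_P_clone p : in_P p -> in_P (clone p).
Proof.
move=> p_lin i; case: (p_lin i) => refl anti tr tot; rewrite /clone; split.
- by move=> u; rewrite eqxx leqnn.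
- move=> u v; case: eqVneq => [_ /anti_leq/val_inj // | Euv /anti Euv'].
  by rewrite Euv' eqxx in Euv.
- move=> v u w /=; case: (eqVneq (collapse u) (collapse v)) => Euv;
    case: (eqVneq (collapse v) (collapse w)) => Evw.
  + by rewrite Euv Evw eqxx; apply: leq_trans.
  + by rewrite Euv (negbTE Evw).
  + by rewrite -Evw (negbTE Euv).
  case: eqVneq => [Euw | _]; last exact: tr.
  rewrite -Euw => puv pvu; have := anti (collapse u) (collapse v).
  by rewrite puv pvu => /(_ isT) E; rewrite E eqxx in Euv.
- by move=> u v; case: eqVneq => _; [apply: leq_total | apply: tot].
Qed.

Lemma npref_clone p u v : collapse u != collapse v ->
  npref (clone p) u v = npref p (collapse u) (collapse v).
Proof.
move=> cuv; apply: eq_card => i; rewrite !inE /spref /clone (negbTE cuv).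
by case: (eqVneq u v) cuv => // ->; rewrite eqxx.
Qed.

Lemma clear_winner_clone (p : profile n h) (q : profile n.+1 h) (x : 'I_n) :
  (forall u v, collapse u != collapse v ->
     npref q u v = npref p (collapse u) (collapse v)) ->
  x != a -> clear_winner p x -> clear_winner q (lift ord_max x).
Proof.
move=> qE xa Cx y yx.
have cyx : collapse y != x.
  by apply: contra_neq yx => cy; apply: collapse_inj; rewrite ?collapse_lift cy.
have [z z_maj z_opp] := Cx _ cyx.
have zy : z != collapse y by apply: contraTneq z_maj => ->; rewrite npref_xx.
exists (lift ord_max z); rewrite qE collapse_lift //.
apply/opposition_ltP => w; have [wx | wx] := eqVneq (collapse w) x.
  have -> : w = lift ord_max x by apply: collapse_inj; rewrite ?collapse_lift wx.
  by rewrite npref_xx; lia.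
by rewrite qE collapse_lift ?wx //; apply: leq_ltn_trans (leq_opposition _ _ _) z_opp.
Qed.

End Clone.

Lemma realizable_clone n h : 2 <= n -> realizable n h -> realizable n.+1 h.
Proof.
move=> n_ge2 [p [x [p_lin Cp Cr]]]; have [a ax] := exists_other x n_ge2.
rewrite eq_sym in ax.
exists (clone a p), (lift ord_max x); split.
- exact: in_P_clone.
- exact: clear_winner_clone (npref_clone p) ax Cp.
- apply: clear_winner_clone ax Cr => u v cuv.
  by rewrite (npref_rev (clone a p)) (npref_rev p) npref_clone // eq_sym.
Qed.

Lemma realizable_add_pairs n h k : realizable n h -> realizable n (h + 2 * k).
Proof.
move=> R; elim: k => [|k IHk]; first by rewrite addn0.
by rewrite mulnS addnCA !addSn add0n; apply: realizable_add_pair.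
Qed.

Lemma realizable_clones n h k : 2 <= n -> realizable n h -> realizable (n + k) h.
Proof.
move=> n_ge2 R; elim: k => [|k IHk]; first by rewrite addn0.
by rewrite addnS; apply: realizable_clone => //; lia.
Qed.

Section RankLists.

Variables (n h : nat) (L : seq (seq nat)).

Definition rank_profile : profile n h := fun i u v =>
  index (val u) (nth [::] L i) <= index (val v) (nth [::] L i).

Definition complete_lists : bool :=
  all (fun i => all (mem (nth [::] L i)) (iota 0 n)) (iota 0 h).

Definition rank_count (z y : nat) : nat :=
  count (fun i => index z (nth [::] L i) < index y (nth [::] L i)) (iota 0 h).

Definition clear_winnerb (c : nat -> nat -> nat) (x : nat) : bool :=
  all (fun y => (y == x) || has (fun z => (h < 2 * c z y) &&
     all (fun w => c w x < c z y) (iota 0 n)) (iota 0 n)) (iota 0 n).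

Hypothesis L_complete : complete_lists.

Lemma mem_rank_list (i : 'I_h) (u : 'I_n) : val u \in nth [::] L i.
Proof.
move/allP: L_complete => /(_ i); rewrite mem_iota ltn_ord => /(_ isT) /allP.
by apply; rewrite mem_iota ltn_ord.
Qed.

Lemma in_P_rank_profile : in_P rank_profile.
Proof.
move=> i; apply: linear_order_ranked => u v /(index_inj 0) eq_uv.
exact/val_inj/eq_uv/mem_rank_list/mem_rank_list.
Qed.

Lemma npref_rank_profile z y : npref rank_profile z y = rank_count z y.
Proof.
rewrite npref_sum /rank_count -sum1_count (_ : iota 0 h = index_iota 0 h);
  last by rewrite /index_iota subn0.
rewrite big_mkord [RHS]big_mkcond /=.
apply: eq_bigr => i _; rewrite /spref /rank_profile.
case: (eqVneq z y) => [-> | zy]; first by rewrite ltnn.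
rewrite /= leq_eqVlt; case: eqP => [/(index_inj 0) E | _]; last by case: ltnP.
by move: zy; rewrite (val_inj (E (mem_rank_list i z) (mem_rank_list i y))) eqxx.
Qed.

Lemma clear_winnerbP (p : profile n h) (c : nat -> nat -> nat) (x : 'I_n) :
  (forall z y : 'I_n, npref p z y = c z y) -> clear_winnerb c x -> clear_winner p x.
Proof.
move=> pE /allP Cx y yx; move: (Cx y); rewrite mem_iota ltn_ord val_eqE (negbTE yx).
case/(_ isT)/hasP => z; rewrite mem_iota => zn /andP[z_maj /allP z_opp].
exists (Ordinal zn); rewrite pE //; apply/opposition_ltP => w; rewrite pE.
by apply: z_opp; rewrite mem_iota ltn_ord.
Qed.

Lemma realizable_rank_lists (x : 'I_n) :
  clear_winnerb rank_count x -> clear_winnerb (fun z y => rank_count y z) x ->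
  realizable n h.
Proof.
move=> Cx Cr; exists rank_profile, x; split; first exact: in_P_rank_profile.
  exact: clear_winnerbP npref_rank_profile Cx.
by apply: clear_winnerbP Cr => z y; rewrite npref_rev npref_rank_profile.
Qed.

End RankLists.

Lemma realizable_4_6 : realizable 4 6.
Proof.
by apply: (@realizable_rank_lists 4 6
  [:: [:: 2;0;1;3]; [:: 0;2;1;3]; [:: 1;0;3;2]; [:: 1;3;2;0]; [:: 3;0;2;1];
      [:: 3;2;1;0]] _ ord0); vm_compute.
Qed.

Lemma realizable_4_9 : realizable 4 9.
Proof.
by apply: (@realizable_rank_lists 4 9
  [:: [:: 1;2;3;0]; [:: 2;3;0;1]; [:: 0;3;1;2]; [:: 1;2;0;3]; [:: 2;0;3;1];
      [:: 0;2;3;1]; [:: 3;0;1;2]; [:: 1;2;0;3]; [:: 3;1;0;2]] _ ord0); vm_compute.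
Qed.

Lemma realizable_5_4 : realizable 5 4.
Proof.
by apply: (@realizable_rank_lists 5 4
  [:: [:: 1;3;2;0;4]; [:: 3;0;2;4;1]; [:: 2;4;0;1;3]; [:: 4;1;0;3;2]] _ ord0);
  vm_compute.
Qed.

Lemma realizable_5_7 : realizable 5 7.
Proof.
by apply: (@realizable_rank_lists 5 7
  [:: [:: 3;4;2;1;0]; [:: 1;3;4;0;2]; [:: 0;2;1;3;4]; [:: 1;3;0;4;2];
      [:: 4;2;0;3;1]; [:: 0;4;2;1;3]; [:: 2;1;3;0;4]] _ ord0); vm_compute.
Qed.

Lemma realizable_6_5 : realizable 6 5.
Proof.
by apply: (@realizable_rank_lists 6 5
  [:: [:: 3;0;2;5;4;1]; [:: 4;1;3;0;2;5]; [:: 0;5;4;1;3;2]; [:: 2;5;0;4;1;3];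
      [:: 1;3;2;5;4;0]] _ ord0); vm_compute.
Qed.

Lemma realizable_grow n0 h0 n h : 2 <= n0 -> n0 <= n -> h0 <= h ->
  ~~ odd (h - h0) -> realizable n0 h0 -> realizable n h.
Proof.
move=> n0_ge2 n0_le h0_le even R.
have -> : n = n0 + (n - n0) by lia.
have -> : h = h0 + 2 * (h - h0)./2 by lia.
exact/realizable_clones/realizable_add_pairs.
Qed.

Lemma realizable_of_not_T1 n h : 2 <= n -> 2 <= h -> ~ T1 h n -> realizable n h.
Proof.
move=> n_ge2 h_ge2 notT1.
have [h_le3 | h_ge4] := leqP h 3; first by case: notT1; left.
have [n_le3 | n_ge4] := leqP n 3; first by case: notT1; right; left.
have excl : (h, n) \notin [:: (4, 4); (5, 4); (7, 4); (5, 5)].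
  apply/negP; rewrite !inE => /or4P mem; apply: notT1; do 2 right.
  by case: mem => /eqP ->; auto.
have : h = 4 \/ h = 5 \/ h = 7 \/ (6 <= h /\ ~~ odd h) \/ (9 <= h /\ odd h) by lia.
case=> [h4 | [h5 | [h7 | [[h_ge6 h_even] | [h_ge9 h_odd]]]]]; subst.
- have n_ne4 : n != 4 by apply: contraNneq excl => ->.
  by apply: (realizable_grow (n0 := 5) (h0 := 4)) realizable_5_4; lia.
- have n_ne4 : n != 4 by apply: contraNneq excl => ->.
  have n_ne5 : n != 5 by apply: contraNneq excl => ->.
  by apply: (realizable_grow (n0 := 6) (h0 := 5)) realizable_6_5; lia.
- have n_ne4 : n != 4 by apply: contraNneq excl => ->.
  by apply: (realizable_grow (n0 := 5) (h0 := 7)) realizable_5_7; lia.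
- by apply: (realizable_grow (n0 := 4) (h0 := 6)) realizable_4_6; lia.
- by apply: (realizable_grow (n0 := 4) (h0 := 9)) realizable_4_9; lia.
Qed.

Theorem proposition3 (n h : nat) (hn : 2 <= n) (hh : 2 <= h) :
  (exists (p : profile n h) (x : 'I_n),
      in_P p /\
      D (mu_of p) p = [set x] /\
      D (mu_of (rev_profile p)) (rev_profile p) = [set x])
  <-> ~ T1 h n.
Proof.
have h_gt0 : 0 < h by lia.
split => [[p [x [p_lin [Dp Dr]]]] | notT1].
  have Cp := (D_mu_of_set1 p x h_gt0 hn).1 Dp.
  have Cr := (D_mu_of_set1 (rev_profile p) x h_gt0 hn).1 Dr.
  have [M [h_le bound]] := reversal_bound hn p_lin Cp Cr.
  exact: not_T1 hn hh h_le bound.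
have [p [x [p_lin Cp Cr]]] := realizable_of_not_T1 hn hh notT1.
exists p, x; split; [by [] | split]; exact/(D_mu_of_set1 _ _ h_gt0 hn).
Qed.
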